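(* Let $H$ be a non-zero real constant. Let $J\subset(0,\infty)$ be an open interval and $u:J\to\mathbb{R}$ a smooth function with $u'(\alpha)\neq0$ on $J$. Consider the rotational surface $\bar f(\alpha,v)=(\alpha\cos v,\ \alpha\sin v,\ u(\alpha))$ in $(\mathbb{R}^3,\|\cdot\|)$, oriented so that the horizontal component $(\eta_1,\eta_2)$ of its Birkhoff–Gauss map $\eta$ at $\bar f(\alpha,v)$ is a positive multiple of $-(\cos v,\sin v)$ (i.e. points toward the $x_3$-axis; equivalently, $\nabla\Phi(\eta)$ is a positive multiple of $f_u\times f_v$ for the height parametrization $f(u,v)=(\alpha(u)\cos v,\alpha(u)\sin v,u)$, $\alpha$ the local inverse of $u$). Then this surface has constant Minkowski mean curvature $H$ if and only if there are a constant $c_1$ and a fixed sign such that, for all $\alpha\in J$, $c_1-H\alpha^2>0$, $\alpha^{2m}>(c_1-H\alpha^2)^{2m}$, and $$u'(\alpha)=\pm\frac{(c_1-H\alpha^2)^{2m-1}}{\left\{\alpha^{2m}-(c_1-H\alpha^2)^{2m}\right\}^{\frac{2m-1}{2m}}},$$ i.e. $u(\alpha)=\pm\int\frac{(c_1-H\alpha^2)^{2m-1}}{\{\alpha^{2m}-(c_1-H\alpha^2)^{2m}\}^{\frac{2m-1}{2m}}}\,d\alpha$.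
   Context: Fix an integer $m\ge 2$. Let $\Phi(x_1,x_2,x_3)=(x_1^2+x_2^2)^m+x_3^{2m}$ and let $\|\cdot\|$ be the norm on $\mathbb{R}^3$ whose unit sphere is $S=\{x\in\mathbb{R}^3:\Phi(x)=1\}$ (a smooth, strictly convex surface). For a surface given by a parametrization $f(s,v)$, its Birkhoff–Gauss map $\eta$ is the map into $S$ defined by requiring $\eta\in S$ and $\nabla\Phi(\eta)=\mu\, f_s\times f_v$ for some function $\mu>0$, where $\times$ is the standard cross product (so the tangent plane of $S$ at $\eta(p)$ is parallel to $T_pM$, and $d\eta_p$ is an endomorphism of $T_pM$). The Minkowski mean curvature is $H=\tfrac12\operatorname{trace}(d\eta_p)$; its sign changes when the orientation is reversed. *)

From Stdlib Require Import Reals Lra Lia.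
From Coquelicot Require Import Coquelicot.
Open Scope R_scope.

Record R3 := mkR3 { x1 : R; x2 : R; x3 : R }.

Definition addv (p q : R3) : R3 := mkR3 (x1 p + x1 q) (x2 p + x2 q) (x3 p + x3 q).
Definition scalev (c : R) (p : R3) : R3 := mkR3 (c * x1 p) (c * x2 p) (c * x3 p).
Definition cross (p q : R3) : R3 :=
  mkR3 (x2 p * x3 q - x3 p * x2 q)
       (x3 p * x1 q - x1 p * x3 q)
       (x1 p * x2 q - x2 p * x1 q).

(* Phi(x) = (x1^2 + x2^2)^m + x3^(2m); the unit sphere S of the norm is Phi = 1 *)
Definition Phi (m : nat) (p : R3) : R :=
  (x1 p ^ 2 + x2 p ^ 2) ^ m + x3 p ^ (2 * m).

Definition gradPhi (m : nat) (p : R3) : R3 :=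
  mkR3 (Derive (fun t => Phi m (mkR3 t (x2 p) (x3 p))) (x1 p))
       (Derive (fun t => Phi m (mkR3 (x1 p) t (x3 p))) (x2 p))
       (Derive (fun t => Phi m (mkR3 (x1 p) (x2 p) t)) (x3 p)).

Definition d_s (F : R -> R -> R3) (s v : R) : R3 :=
  mkR3 (Derive (fun t => x1 (F t v)) s)
       (Derive (fun t => x2 (F t v)) s)
       (Derive (fun t => x3 (F t v)) s).
Definition d_v (F : R -> R -> R3) (s v : R) : R3 :=
  mkR3 (Derive (fun t => x1 (F s t)) v)
       (Derive (fun t => x2 (F s t)) v)
       (Derive (fun t => x3 (F s t)) v).
Definition has_partials (F : R -> R -> R3) (s v : R) : Prop :=
  ex_derive (fun t => x1 (F t v)) s /\ ex_derive (fun t => x2 (F t v)) s /\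
  ex_derive (fun t => x3 (F t v)) s /\
  ex_derive (fun t => x1 (F s t)) v /\ ex_derive (fun t => x2 (F s t)) v /\
  ex_derive (fun t => x3 (F s t)) v.

(* eta is a Birkhoff-Gauss map of the parametrized surface f on the domain D,
   for one of the two orientations: eta in S and grad Phi(eta) parallel to
   f_s x f_v.  The orientation is fixed separately (see rot_CMC). *)
Definition is_BG_map (m : nat) (f eta : R -> R -> R3) (D : R -> R -> Prop) : Prop :=
  forall s v, D s v ->
    Phi m (eta s v) = 1 /\
    exists mu, mu <> 0 /\ gradPhi m (eta s v) = scalev mu (cross (d_s f s v) (d_v f s v)).

(* Minkowski mean curvature of f (w.r.t. eta) at (s,v) equals H:
   d eta_p is the endomorphism of T_pM with d eta(f_s) = a f_s + b f_v,
   d eta(f_v) = c f_s + d f_v, and H = (1/2) trace = (a + d)/2. *)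
Definition mink_mean_curv_is (f eta : R -> R -> R3) (s v H : R) : Prop :=
  has_partials eta s v /\
  exists a b c d,
    d_s eta s v = addv (scalev a (d_s f s v)) (scalev b (d_v f s v)) /\
    d_v eta s v = addv (scalev c (d_s f s v)) (scalev d (d_v f s v)) /\
    (a + d) / 2 = H.

Definition inJ (a : R) (b : Rbar) (x : R) : Prop := a < x /\ Rbar_lt (Finite x) b.

Definition rot_surf (u : R -> R) : R -> R -> R3 :=
  fun al v => mkR3 (al * cos v) (al * sin v) (u al).

Definition rot_CMC (m : nat) (a : R) (b : Rbar) (u : R -> R) (H : R) : Prop :=
  exists eta : R -> R -> R3,
    is_BG_map m (rot_surf u) eta (fun al _ => inJ a b al) /\
    (forall al v, inJ a b al ->
       exists lam, lam > 0 /\ x1 (eta al v) = - lam * cos v /\ x2 (eta al v) = - lam * sin v) /\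
    (forall al v, inJ a b al -> mink_mean_curv_is (rot_surf u) eta al v H).

From Stdlib Require Import Reals Lra Lia.
From Coquelicot Require Import Coquelicot.
Open Scope R_scope.

(* Write [eta = (-l cos v, -l sin v, z)] along a parallel.  Since [grad Phi] of such a
   point is [2m (-l^(2m-1) cos v, -l^(2m-1) sin v, z^(2m-1))] and the normal of the
   rotational surface is [alpha (-u' cos v, -u' sin v, 1)], the Birkhoff-Gauss condition
   reads [l^(2m) + z^(2m) = 1] and [l^(2m-1) = z^(2m-1) u'], which determines [l] from
   [u'] alone; hence [l = l(alpha)] does not depend on [v].  Then [d eta] is diagonal in
   the basis [f_alpha, f_v], with eigenvalues [-l'] and [-l/alpha], so the mean curvature
   is [-(alpha l)' / (2 alpha)].  Constant mean curvature [H] thus means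
   [alpha l = c1 - H alpha^2], and solving the two algebraic relations for [u'] gives the
   formula; [z] has the constant sign of [u'], which has no zero on [J].  Conversely, the
   formula defines [l] and [z], hence a Birkhoff-Gauss map with these properties. *)

Lemma pow_even_ge0 x m : 0 <= x ^ (2 * m).
Proof. rewrite pow_mult; apply pow_le; nra. Qed.

Lemma pow_even_gt0 x m : x <> 0 -> 0 < x ^ (2 * m).
Proof. intros Hx; rewrite pow_mult; apply pow_lt; nra. Qed.

Lemma pow_pred_mul x n : (1 <= n)%nat -> x ^ (n - 1) * x = x ^ n.
Proof.
  intros Hn; replace n with (S (n - 1)) at 2 by lia; simpl; ring.
Qed.

Lemma pow_sqr_pred x m : (1 <= m)%nat -> (x ^ 2) ^ (m - 1) * x = x ^ (2 * m - 1).
Proof.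
  intros Hm; replace (2 * m - 1)%nat with (2 * (m - 1) + 1)%nat by lia.
  rewrite pow_add, pow_mult, pow_1; reflexivity.
Qed.

Lemma pow_odd_le0 x m : (1 <= m)%nat -> x <= 0 -> x ^ (2 * m - 1) <= 0.
Proof.
  intros Hm Hx; rewrite <- pow_sqr_pred by exact Hm.
  pose proof (pow_le (x ^ 2) (m - 1) (pow2_ge_0 x)); nra.
Qed.

Lemma pow_lt_pow_l x y n : 0 <= x < y -> (1 <= n)%nat -> x ^ n < y ^ n.
Proof.
  intros Hxy Hn; induction n as [|[|n] IH]; [lia | simpl; lra |].
  assert (x ^ S n < y ^ S n) by (apply IH; lia).
  pose proof (pow_le x (S n) (proj1 Hxy)).
  change (x * x ^ S n < y * y ^ S n); nra.
Qed.

Lemma sign_pow_even sg m : sg = 1 \/ sg = -1 -> sg ^ (2 * m) = 1.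
Proof. intros [-> | ->]; [apply pow1 | apply pow_1_even]. Qed.

Lemma sign_pow_odd sg m : sg = 1 \/ sg = -1 -> (1 <= m)%nat -> sg ^ (2 * m - 1) = sg.
Proof.
  intros Hs Hm; rewrite <- pow_sqr_pred by exact Hm.
  replace (sg ^ 2) with 1 by (destruct Hs as [-> | ->]; ring).
  rewrite pow1; ring.
Qed.

Lemma Rpower_inv_pow x n : 0 < x -> (1 <= n)%nat -> Rpower x (/ INR n) ^ n = x.
Proof.
  intros Hx Hn.
  rewrite <- Rpower_pow by (unfold Rpower; apply exp_pos).
  rewrite Rpower_mult, Rinv_l by (apply not_0_INR; lia).
  apply Rpower_1, Hx.
Qed.

Lemma Rpower_pow_frac y n : 0 < y -> (1 <= n)%nat ->
  Rpower (y ^ n) (INR (n - 1) / INR n) = y ^ (n - 1).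
Proof.
  intros Hy Hn.
  rewrite <- (Rpower_pow n y Hy), Rpower_mult, <- Rpower_pow by exact Hy.
  f_equal; field; apply not_0_INR; lia.
Qed.

Section Interval.

Variables (a : R) (b : Rbar).

Lemma inJ_between x y t : inJ a b x -> inJ a b y -> Rmin x y <= t <= Rmax x y -> inJ a b t.
Proof.
  unfold inJ, Rmin, Rmax; intros [Hx1 Hx2] [Hy1 Hy2] Ht.
  destruct (Rle_dec x y); split; try lra;
  destruct b as [b0| |]; simpl in *; auto; lra.
Qed.

Lemma inJ_exists : Rbar_lt a b -> exists x, inJ a b x.
Proof.
  unfold inJ; destruct b as [b0| |]; simpl; intros Hab.
  - exists ((a + b0) / 2); lra.
  - exists (a + 1); split; [lra | exact I].
  - contradiction.
Qed.

Lemma inJ_derive0_const (F : R -> R) :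
  (forall x, inJ a b x -> is_derive F x 0) ->
  forall x y, inJ a b x -> inJ a b y -> F x = F y.
Proof.
  intros HF x y Hx Hy.
  assert (HJ : forall t, Rmin x y <= t <= Rmax x y -> is_derive F t 0)
    by (intros t Ht; apply HF, (inJ_between x y t Hx Hy Ht)).
  destruct (MVT_gen F x y (fun _ => 0)) as [c [_ Hc]].
  - intros t Ht; apply HJ; lra.
  - intros t Ht; apply continuity_pt_filterlim, (ex_derive_continuous F t).
    exists 0; apply HJ, Ht.
  - lra.
Qed.

Lemma inJ_sign_preserved (g : R -> R) :
  (forall x, inJ a b x -> continuity_pt g x) -> (forall x, inJ a b x -> g x <> 0) ->
  forall x y, inJ a b x -> inJ a b y -> 0 < g x -> 0 < g y.
Proof.
  intros Hc Hn x y Hx Hy Hgx.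
  destruct (Rlt_dec 0 (g y)) as [|Hgy]; [assumption | exfalso].
  assert (Hgy' : g y < 0) by (pose proof (Hn y Hy); lra).
  assert (Hxy : x <> y) by (intros ->; lra).
  assert (Hcont : forall t, Rmin x y <= t <= Rmax x y -> continuity_pt g t)
    by (intros t Ht; apply Hc, (inJ_between x y t Hx Hy Ht)).
  assert (Hzero : forall c, Rmin x y <= c <= Rmax x y -> g c <> 0)
    by (intros c Ht; apply Hn, (inJ_between x y c Hx Hy Ht)).
  unfold Rmin, Rmax in Hcont, Hzero; destruct (Rle_dec x y).
  - destruct (Ranalysis5.IVT_interv (fun t => - g t) x y) as [c [Hc1 Hc2]];
      [intros t Ht; apply continuity_pt_opp, Hcont; lra | lra | lra | lra |].
    apply (Hzero c Hc1); lra.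
  - destruct (Ranalysis5.IVT_interv g y x) as [c [Hc1 Hc2]];
      [intros t Ht; apply Hcont; lra | lra | lra | lra |].
    apply (Hzero c Hc1 Hc2).
Qed.

Lemma inJ_sign_const (g : R -> R) :
  Rbar_lt a b ->
  (forall x, inJ a b x -> continuity_pt g x) -> (forall x, inJ a b x -> g x <> 0) ->
  exists sg, (sg = 1 \/ sg = -1) /\ forall x, inJ a b x -> 0 < sg * g x.
Proof.
  intros Hab Hc Hn; destruct (inJ_exists Hab) as [x0 Hx0].
  destruct (Rlt_dec 0 (g x0)) as [Hpos | Hneg].
  - exists 1; split; [now left |]; intros x Hx; rewrite Rmult_1_l.
    exact (inJ_sign_preserved g Hc Hn x0 x Hx0 Hx Hpos).
  - exists (-1); split; [now right |]; intros x Hx.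
    replace (-1 * g x) with (- g x) by ring.
    apply (inJ_sign_preserved (fun t => - g t)) with x0; auto.
    + intros t Ht; apply continuity_pt_opp, Hc, Ht.
    + intros t Ht; pose proof (Hn t Ht); lra.
    + pose proof (Hn x0 Hx0); lra.
Qed.

End Interval.

Lemma gradPhi_eq m p : (1 <= m)%nat ->
  gradPhi m p = mkR3 (2 * INR m * (x1 p ^ 2 + x2 p ^ 2) ^ (m - 1) * x1 p)
                     (2 * INR m * (x1 p ^ 2 + x2 p ^ 2) ^ (m - 1) * x2 p)
                     (INR (2 * m) * x3 p ^ (2 * m - 1)).
Proof.
  intros Hm; destruct p as [p1 p2 p3]; unfold gradPhi, Phi; cbn [x1 x2 x3].
  change (2 * m)%nat with (m + (m + 0))%nat.
  replace (m + (m + 0) - 1)%nat with (Init.Nat.pred (m + (m + 0))) by lia.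
  replace (m - 1)%nat with (Init.Nat.pred m) by lia.
  replace (p1 ^ 2 + p2 ^ 2) with (p1 * (p1 * 1) + p2 * (p2 * 1)) by ring.
  f_equal; apply is_derive_unique; auto_derive; auto; ring.
Qed.

Lemma d_s_rot_surf u al v : d_s (rot_surf u) al v = mkR3 (cos v) (sin v) (Derive u al).
Proof.
  unfold d_s, rot_surf; cbn [x1 x2 x3]; f_equal; try reflexivity;
  apply is_derive_unique; auto_derive; auto; ring.
Qed.

Lemma d_v_rot_surf u al v : d_v (rot_surf u) al v = mkR3 (- al * sin v) (al * cos v) 0.
Proof.
  unfold d_v, rot_surf; cbn [x1 x2 x3]; f_equal;
  apply is_derive_unique; auto_derive; auto; ring.
Qed.

Lemma cross_rot_surf u al v :
  cross (d_s (rot_surf u) al v) (d_v (rot_surf u) al v) =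
  mkR3 (- al * Derive u al * cos v) (- al * Derive u al * sin v) al.
Proof.
  rewrite d_s_rot_surf, d_v_rot_surf; unfold cross; cbn [x1 x2 x3].
  pose proof (sin2_cos2 v) as E; unfold Rsqr in E.
  f_equal; try ring.
  transitivity (al * (sin v * sin v + cos v * cos v)); [ring | rewrite E; ring].
Qed.

Definition radial_vec (l z v : R) : R3 := mkR3 (- l * cos v) (- l * sin v) z.

Lemma radial_vec_sq l z v : x1 (radial_vec l z v) ^ 2 + x2 (radial_vec l z v) ^ 2 = l ^ 2.
Proof.
  pose proof (sin2_cos2 v) as E; unfold Rsqr in E; cbn [radial_vec x1 x2].
  transitivity (l ^ 2 * (sin v * sin v + cos v * cos v)); [ring | rewrite E; ring].
Qed.

Lemma Phi_radial_vec m l z v : Phi m (radial_vec l z v) = l ^ (2 * m) + z ^ (2 * m).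
Proof. unfold Phi; rewrite radial_vec_sq, <- pow_mult; reflexivity. Qed.

Lemma gradPhi_radial_vec m l z v : (1 <= m)%nat ->
  gradPhi m (radial_vec l z v) =
  mkR3 (- INR (2 * m) * l ^ (2 * m - 1) * cos v) (- INR (2 * m) * l ^ (2 * m - 1) * sin v)
       (INR (2 * m) * z ^ (2 * m - 1)).
Proof.
  intros Hm; rewrite gradPhi_eq, radial_vec_sq by exact Hm; cbn [radial_vec x1 x2 x3].
  rewrite <- (pow_sqr_pred l), mult_INR by exact Hm; f_equal; simpl; ring.
Qed.

Lemma rot_BG_radial_iff m u al v l z : (1 <= m)%nat -> al <> 0 ->
  (Phi m (radial_vec l z v) = 1 /\
   exists mu, mu <> 0 /\
     gradPhi m (radial_vec l z v) = scalev mu (cross (d_s (rot_surf u) al v) (d_v (rot_surf u) al v)))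
  <-> l ^ (2 * m) + z ^ (2 * m) = 1 /\ z <> 0 /\ l ^ (2 * m - 1) = z ^ (2 * m - 1) * Derive u al.
Proof.
  intros Hm Hal.
  assert (HN : INR (2 * m) <> 0) by (apply not_0_INR; lia).
  rewrite Phi_radial_vec, gradPhi_radial_vec, cross_rot_surf by exact Hm; unfold scalev; cbn [x1 x2 x3].
  split.
  - intros [HP [mu [Hmu HG]]]; injection HG as G1 G2 G3.
    change (m + (m + 0))%nat with (2 * m)%nat in G1, G2, G3.
    pose proof (sin2_cos2 v) as E; unfold Rsqr in E.
    assert (G : INR (2 * m) * l ^ (2 * m - 1) = mu * (al * Derive u al)).
    { transitivity (INR (2 * m) * l ^ (2 * m - 1) * (sin v * sin v + cos v * cos v));
        [rewrite E; ring |].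
      transitivity (- (- INR (2 * m) * l ^ (2 * m - 1) * cos v) * cos v
                    - (- INR (2 * m) * l ^ (2 * m - 1) * sin v) * sin v); [ring |].
      rewrite G1, G2.
      transitivity (mu * (al * Derive u al) * (sin v * sin v + cos v * cos v)); [ring | rewrite E; ring]. }
    split; [exact HP | split].
    + intros ->; rewrite pow_i in G3 by lia.
      destruct (Rmult_integral mu al) as [|]; [lra | contradiction | contradiction].
    + apply Rmult_eq_reg_l with (INR (2 * m)); [| exact HN].
      rewrite G; transitivity (mu * al * Derive u al); [ring | rewrite <- G3; ring].
  - intros [HP [Hz HK]]; split; [exact HP |].
    exists (INR (2 * m) * z ^ (2 * m - 1) / al); split.
    + assert (z ^ (2 * m - 1) <> 0) by (apply pow_nonzero, Hz).
      apply Rmult_integral_contrapositive_currified;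
        [apply Rmult_integral_contrapositive_currified; auto | apply Rinv_neq_0_compat, Hal].
    + rewrite HK; f_equal; field; exact Hal.
Qed.

Lemma radial_length_unique m l1 l2 z1 z2 w : (1 <= m)%nat -> 0 < l1 -> 0 < l2 ->
  l1 ^ (2 * m - 1) = z1 ^ (2 * m - 1) * w -> l2 ^ (2 * m - 1) = z2 ^ (2 * m - 1) * w ->
  l1 ^ (2 * m) + z1 ^ (2 * m) = 1 -> l2 ^ (2 * m) + z2 ^ (2 * m) = 1 -> l1 = l2.
Proof.
  intros Hm Hl1 Hl2 E1 E2 F1 F2.
  (* Eliminating [z], each [l] is a zero of
     [g l = (l^(2m-1))^(2m) - (1 - l^(2m))^(2m-1) w^(2m)], strictly increasing where [l^(2m) <= 1]. *)
  set (g := fun l => (l ^ (2 * m - 1)) ^ (2 * m) - (1 - l ^ (2 * m)) ^ (2 * m - 1) * w ^ (2 * m)).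
  assert (Hg : forall l z, l ^ (2 * m - 1) = z ^ (2 * m - 1) * w ->
                 l ^ (2 * m) + z ^ (2 * m) = 1 -> g l = 0).
  { intros l z E F; unfold g; rewrite E, Rpow_mult_distr.
    replace (1 - l ^ (2 * m)) with (z ^ (2 * m)) by lra.
    rewrite <- !pow_mult, Nat.mul_comm; ring. }
  assert (Hmono : forall x y zy, 0 < x < y -> y ^ (2 * m) + zy ^ (2 * m) = 1 -> g x < g y).
  { intros x y zy Hxy Fy; unfold g.
    pose proof (pow_even_ge0 zy m); pose proof (pow_even_ge0 w m).
    assert (x ^ (2 * m) < y ^ (2 * m)) by (apply pow_lt_pow_l; lra || lia).
    assert (x ^ (2 * m - 1) < y ^ (2 * m - 1)) by (apply pow_lt_pow_l; lra || lia).
    assert ((x ^ (2 * m - 1)) ^ (2 * m) < (y ^ (2 * m - 1)) ^ (2 * m)).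
    { apply pow_lt_pow_l; [split; [apply pow_le; lra | assumption] | lia]. }
    assert ((1 - y ^ (2 * m)) ^ (2 * m - 1) <= (1 - x ^ (2 * m)) ^ (2 * m - 1))
      by (apply pow_incr; lra).
    assert ((1 - y ^ (2 * m)) ^ (2 * m - 1) * w ^ (2 * m) <=
            (1 - x ^ (2 * m)) ^ (2 * m - 1) * w ^ (2 * m))
      by (apply Rmult_le_compat_r; assumption).
    lra. }
  pose proof (Hg _ _ E1 F1); pose proof (Hg _ _ E2 F2).
  destruct (Rtotal_order l1 l2) as [Hlt | [Heq | Hgt]]; [| exact Heq |].
  - pose proof (Hmono l1 l2 z2 (conj Hl1 Hlt) F2); lra.
  - pose proof (Hmono l2 l1 z1 (conj Hl2 Hgt) F1); lra.
Qed.

Lemma mink_mean_curv_radial u (l z : R -> R) al v dl : al <> 0 ->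
  is_derive l al dl -> is_derive z al (- dl * Derive u al) ->
  mink_mean_curv_is (rot_surf u) (fun s t => radial_vec (l s) (z s) t) al v
    (- (dl + l al / al) / 2).
Proof.
  intros Hal Hl Hz.
  assert (Hl' : ex_derive l al) by (exists dl; exact Hl).
  assert (HDl : Derive (fun t => l t) al = dl) by (apply is_derive_unique, Hl).
  split.
  - unfold has_partials, radial_vec; cbn [x1 x2 x3].
    repeat split; auto_derive; auto; exists (- dl * Derive u al); exact Hz.
  - exists (- dl), 0, 0, (- l al / al); split; [| split; [| field; exact Hal]].
    + rewrite d_s_rot_surf, d_v_rot_surf; unfold d_s, radial_vec, addv, scalev; cbn [x1 x2 x3].
      f_equal; apply is_derive_unique;
        [auto_derive; auto; rewrite HDl; ring .. | rewrite Rmult_0_l, Rplus_0_r; exact Hz].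
    + rewrite d_s_rot_surf, d_v_rot_surf; unfold d_v, radial_vec, addv, scalev; cbn [x1 x2 x3].
      f_equal; apply is_derive_unique; auto_derive; auto; field; exact Hal.
Qed.

Lemma mink_mean_curv_meridian u eta al l H : al <> 0 ->
  (forall t, x2 (eta al t) = - l * sin t) ->
  mink_mean_curv_is (rot_surf u) eta al 0 H ->
  is_derive (fun s => x1 (eta s 0)) al (2 * H + l / al).
Proof.
  intros Hal Hx2 [[[d1 Hd1] _] [a0 [b0 [c0 [d0 [Hs [Hv Hsum]]]]]]].
  rewrite d_s_rot_surf, d_v_rot_surf in Hs, Hv.
  unfold d_s, d_v, addv, scalev in Hs, Hv; cbn [x1 x2 x3] in Hs, Hv.
  injection Hs as S1 _ _; injection Hv as _ V2 _.
  assert (HD1 : Derive (fun t => x1 (eta t 0)) al = d1) by (apply is_derive_unique, Hd1).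
  rewrite cos_0, sin_0, HD1 in S1; rewrite cos_0, sin_0 in V2.
  assert (HD2 : Derive (fun t => x2 (eta al t)) 0 = - l).
  { rewrite (Derive_ext _ _ _ Hx2); apply is_derive_unique; auto_derive; auto.
    rewrite cos_0; ring. }
  rewrite HD2 in V2.
  replace (2 * H + l / al) with d1; [exact Hd1 |].
  assert (d0 = - l / al) by (field_simplify_eq; [lra | exact Hal]).
  lra.
Qed.

Definition slope_formula (m : nat) (sg r al : R) : R :=
  sg * r ^ (2 * m - 1) / Rpower (al ^ (2 * m) - r ^ (2 * m)) (INR (2 * m - 1) / INR (2 * m)).

Definition profile_condition (m : nat) (H c1 sg : R) (u : R -> R) (al : R) : Prop :=
  0 < c1 - H * al ^ 2 /\ (c1 - H * al ^ 2) ^ (2 * m) < al ^ (2 * m) /\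
  Derive u al = slope_formula m sg (c1 - H * al ^ 2) al.

Lemma slope_formula_radial m sg al l z : (1 <= m)%nat -> 0 < al -> (sg = 1 \/ sg = -1) ->
  0 < sg * z -> z ^ (2 * m) = 1 - l ^ (2 * m) ->
  slope_formula m sg (al * l) al = l ^ (2 * m - 1) / z ^ (2 * m - 1).
Proof.
  intros Hm Hal Hs Hsz Hz.
  assert (E : al ^ (2 * m) - (al * l) ^ (2 * m) = (al * (sg * z)) ^ (2 * m)).
  { rewrite !Rpow_mult_distr, (sign_pow_even sg), Hz by exact Hs; ring. }
  assert (Hsg : sg <> 0) by (destruct Hs; lra).
  assert (z ^ (2 * m - 1) <> 0) by (apply pow_nonzero; intros ->; lra).
  assert (al ^ (2 * m - 1) <> 0) by (apply pow_nonzero; lra).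
  unfold slope_formula; rewrite E.
  rewrite Rpower_pow_frac by (nra || lia).
  rewrite !Rpow_mult_distr, (sign_pow_odd sg) by assumption.
  field; auto.
Qed.

Definition radial_part (H c1 t : R) : R := (c1 - H * t ^ 2) / t.

Definition height_part (m : nat) (sg H c1 t : R) : R :=
  sg * Rpower (1 - radial_part H c1 t ^ (2 * m)) (/ INR (2 * m)).

Lemma is_derive_radial_part H c1 t : t <> 0 -> is_derive (radial_part H c1) t (- c1 / t ^ 2 - H).
Proof. intros Ht; unfold radial_part; auto_derive; [exact Ht | field; exact Ht]. Qed.

Lemma profile_condition_radial m H c1 sg u al : (1 <= m)%nat -> 0 < al -> (sg = 1 \/ sg = -1) ->
  profile_condition m H c1 sg u al ->
  let l := radial_part H c1 al in let z := height_part m sg H c1 al in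
  0 < l /\ 0 < 1 - l ^ (2 * m) /\ z ^ (2 * m) = 1 - l ^ (2 * m) /\ 0 < sg * z /\
  Derive u al = l ^ (2 * m - 1) / z ^ (2 * m - 1).
Proof.
  intros Hm Hal Hs [Hr [Hlt Hu]] l z.
  assert (El : c1 - H * al ^ 2 = al * l) by (unfold l, radial_part; field; lra).
  assert (Hl : 0 < l) by (unfold l, radial_part; apply Rdiv_lt_0_compat; lra).
  rewrite El, Rpow_mult_distr in Hlt; rewrite El in Hu.
  pose proof (pow_lt al (2 * m) Hal).
  assert (Hw : 0 < 1 - l ^ (2 * m)) by nra.
  assert (Hroot : 0 < Rpower (1 - l ^ (2 * m)) (/ INR (2 * m))) by apply exp_pos.
  assert (Hz : z ^ (2 * m) = 1 - l ^ (2 * m)).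
  { unfold z, height_part; fold l.
    rewrite Rpow_mult_distr, (sign_pow_even sg), Rpower_inv_pow by (assumption || lia); ring. }
  assert (Hsz : 0 < sg * z) by (unfold z, height_part; fold l; destruct Hs as [-> | ->]; nra).
  repeat split; try assumption.
  rewrite Hu; apply slope_formula_radial; assumption.
Qed.

Lemma is_derive_height_part m sg H c1 u al : (1 <= m)%nat -> 0 < al -> (sg = 1 \/ sg = -1) ->
  profile_condition m H c1 sg u al ->
  is_derive (height_part m sg H c1) al (- (- c1 / al ^ 2 - H) * Derive u al).
Proof.
  intros Hm Hal Hs Hp.
  destruct (profile_condition_radial m H c1 sg u al Hm Hal Hs Hp) as [Hl [Hw [Hz [Hsz Hu]]]].
  assert (Hdl := is_derive_radial_part H c1 al ltac:(lra)).
  set (l := radial_part H c1 al) in *; set (z := height_part m sg H c1 al) in *.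
  assert (Hz0 : z <> 0) by (intros E; rewrite E in Hsz; lra).
  assert (Hw' : 1 - l ^ (2 * m) = z ^ (2 * m - 1) * z) by (rewrite pow_pred_mul by lia; auto).
  unfold height_part, Rpower; auto_derive.
  - split; [exists (- c1 / al ^ 2 - H); exact Hdl | split; [exact Hw | exact I]].
  - change (m + (m + 0))%nat with (2 * m)%nat; fold l.
    replace (Init.Nat.pred (2 * m)) with (2 * m - 1)%nat by lia.
    replace (Derive (fun x => radial_part H c1 x) al) with (- c1 / al ^ 2 - H)
      by (symmetry; apply is_derive_unique, Hdl).
    rewrite Hu.
    change (exp (/ INR (2 * m) * ln (1 + - l ^ (2 * m)))) with (Rpower (1 - l ^ (2 * m)) (/ INR (2 * m))).
    replace (Rpower (1 - l ^ (2 * m)) (/ INR (2 * m))) with (sg * z)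
      by (unfold z, height_part; fold l; destruct Hs as [-> | ->]; ring).
    change (1 + - l ^ (2 * m)) with (1 - l ^ (2 * m)); rewrite Hw'.
    assert (INR (2 * m) <> 0) by (apply not_0_INR; lia).
    assert (z ^ (2 * m - 1) <> 0) by (apply pow_nonzero, Hz0).
    destruct Hs as [-> | ->]; field; repeat split; auto; lra.
Qed.

Lemma profile_rot_CMC m a b u H c1 sg : (1 <= m)%nat -> 0 <= a -> (sg = 1 \/ sg = -1) ->
  (forall al, inJ a b al -> profile_condition m H c1 sg u al) ->
  rot_CMC m a b u H.
Proof.
  intros Hm Ha Hs Hp.
  exists (fun s v => radial_vec (radial_part H c1 s) (height_part m sg H c1 s) v).
  split; [| split]; intros al v HJ;
    assert (Hal : 0 < al) by (destruct HJ; lra);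
    destruct (profile_condition_radial m H c1 sg u al Hm Hal Hs (Hp al HJ))
      as [Hl [Hw [Hz [Hsz Hu]]]].
  - assert (Hz0 : height_part m sg H c1 al <> 0) by (intros E; rewrite E in Hsz; lra).
    apply (rot_BG_radial_iff m u al v _ _ Hm ltac:(lra)).
    split; [lra | split; [exact Hz0 |]].
    rewrite Hu; field; apply pow_nonzero, Hz0.
  - exists (radial_part H c1 al); split; [lra | split; reflexivity].
  - pose proof (mink_mean_curv_radial u (radial_part H c1) (height_part m sg H c1) al v _
      ltac:(lra) (is_derive_radial_part H c1 al ltac:(lra))
      (is_derive_height_part m sg H c1 u al Hm Hal Hs (Hp al HJ))) as Hmc.
    replace (- ((- c1 / al ^ 2 - H) + radial_part H c1 al / al) / 2) with H in Hmc
      by (unfold radial_part; field; lra).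
    exact Hmc.
Qed.

Lemma rot_BG_meridian m a b u eta : (1 <= m)%nat -> 0 <= a ->
  is_BG_map m (rot_surf u) eta (fun al _ => inJ a b al) ->
  (forall al v, inJ a b al ->
     exists lam, lam > 0 /\ x1 (eta al v) = - lam * cos v /\ x2 (eta al v) = - lam * sin v) ->
  forall al, inJ a b al ->
  let l := - x1 (eta al 0) in let z := x3 (eta al 0) in
  0 < l /\ l ^ (2 * m) + z ^ (2 * m) = 1 /\ z <> 0 /\
  l ^ (2 * m - 1) = z ^ (2 * m - 1) * Derive u al /\
  forall v, x2 (eta al v) = - l * sin v.
Proof.
  intros Hm Ha HBG Hor al HJ l z.
  assert (Hal : al <> 0) by (destruct HJ; lra).
  assert (Hrad : forall v, exists lam, 0 < lam /\ x2 (eta al v) = - lam * sin v /\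
            x1 (eta al v) = - lam * cos v /\
            lam ^ (2 * m) + x3 (eta al v) ^ (2 * m) = 1 /\ x3 (eta al v) <> 0 /\
            lam ^ (2 * m - 1) = x3 (eta al v) ^ (2 * m - 1) * Derive u al).
  { intros v; destruct (Hor al v HJ) as [lam [Hlam [E1 E2]]].
    assert (Heta : eta al v = radial_vec lam (x3 (eta al v)) v)
      by (unfold radial_vec; rewrite <- E1, <- E2; destruct (eta al v); reflexivity).
    destruct (HBG al v HJ) as [HP HN]; rewrite Heta in HP, HN.
    exists lam; split; [lra | split; [exact E2 | split; [exact E1 |]]].
    apply (proj1 (rot_BG_radial_iff m u al v lam _ Hm Hal)); split; assumption. }
  destruct (Hrad 0) as [l0 [Hl0 [_ [E0 [F0 [Hz0 K0]]]]]].
  assert (El : l = l0) by (unfold l; rewrite E0, cos_0; ring).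
  rewrite El; fold z in F0, Hz0, K0.
  repeat split; try assumption.
  intros v; destruct (Hrad v) as [lv [Hlv [E2 [_ [Fv [_ Kv]]]]]].
  rewrite E2; f_equal; f_equal.
  exact (radial_length_unique m lv l0 _ _ _ Hm Hlv Hl0 Kv K0 Fv F0).
Qed.

Lemma rot_CMC_first_integral m a b u H eta : (1 <= m)%nat -> 0 <= a ->
  is_BG_map m (rot_surf u) eta (fun al _ => inJ a b al) ->
  (forall al v, inJ a b al ->
     exists lam, lam > 0 /\ x1 (eta al v) = - lam * cos v /\ x2 (eta al v) = - lam * sin v) ->
  (forall al v, inJ a b al -> mink_mean_curv_is (rot_surf u) eta al v H) ->
  forall al, inJ a b al -> is_derive (fun t => t * - x1 (eta t 0) + H * t ^ 2) al 0.
Proof.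
  intros Hm Ha HBG Hor Hmc al HJ.
  assert (Hal : al <> 0) by (destruct HJ; lra).
  destruct (rot_BG_meridian m a b u eta Hm Ha HBG Hor al HJ) as [_ [_ [_ [_ Hx2]]]].
  pose proof (mink_mean_curv_meridian u eta al _ H Hal Hx2 (Hmc al 0 HJ)) as Hd.
  pose (g := fun s => x1 (eta s 0)).
  change (is_derive (fun t => t * - g t + H * t ^ 2) al 0).
  change (is_derive g al (2 * H + - g al / al)) in Hd.
  clearbody g.
  auto_derive; [exists (2 * H + - g al / al); exact Hd |].
  replace (Derive (fun x => g x) al) with (2 * H + - g al / al)
    by (symmetry; apply is_derive_unique, Hd).
  field; exact Hal.
Qed.

Lemma rot_CMC_profile m a b u H : (1 <= m)%nat -> 0 <= a -> Rbar_lt a b ->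
  (forall al, inJ a b al -> continuity_pt (Derive u) al) ->
  (forall al, inJ a b al -> Derive u al <> 0) ->
  rot_CMC m a b u H ->
  exists c1 sg, (sg = 1 \/ sg = -1) /\ forall al, inJ a b al -> profile_condition m H c1 sg u al.
Proof.
  intros Hm Ha Hab Hcont Hu' [eta [HBG [Hor Hmc]]].
  destruct (inJ_sign_const a b (Derive u) Hab Hcont Hu') as [sg [Hs Hsg]].
  destruct (inJ_exists a b Hab) as [al0 H0].
  set (F := fun t => t * - x1 (eta t 0) + H * t ^ 2).
  exists (F al0), sg; split; [exact Hs |]; intros al HJ.
  assert (Hal : 0 < al) by (destruct HJ; lra).
  destruct (rot_BG_meridian m a b u eta Hm Ha HBG Hor al HJ) as [Hl [HF [Hz [HK _]]]].
  set (l := - x1 (eta al 0)) in *; set (z := x3 (eta al 0)) in *.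
  assert (Hr : F al0 - H * al ^ 2 = al * l).
  { rewrite (inJ_derive0_const a b F (rot_CMC_first_integral m a b u H eta Hm Ha HBG Hor Hmc)
               al0 al H0 HJ).
    unfold F; fold l; ring. }
  (* [z] has the sign of [u'], since [l^(2m-1) = z^(2m-1) u'] is positive. *)
  assert (Hsz : 0 < sg * z).
  { destruct (Rlt_dec 0 (sg * z)) as [| Hle]; [assumption | exfalso].
    pose proof (pow_odd_le0 (sg * z) m Hm ltac:(lra)) as Hodd.
    rewrite Rpow_mult_distr, (sign_pow_odd sg) in Hodd by assumption.
    pose proof (pow_lt l (2 * m - 1) Hl) as Hpos; rewrite HK in Hpos.
    pose proof (Hsg al HJ).
    assert (Hsg2 : sg * sg = 1) by (destruct Hs as [-> | ->]; ring).
    assert ((sg * z ^ (2 * m - 1)) * (sg * Derive u al) = z ^ (2 * m - 1) * Derive u al)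
      by (transitivity (sg * sg * (z ^ (2 * m - 1) * Derive u al)); [ring | rewrite Hsg2; ring]).
    nra. }
  pose proof (pow_even_gt0 z m Hz); pose proof (pow_lt al (2 * m) Hal).
  unfold profile_condition; rewrite Hr; split; [nra | split].
  - rewrite Rpow_mult_distr; nra.
  - rewrite (slope_formula_radial m sg al l z) by (assumption || lra).
    rewrite HK; field; apply pow_nonzero, Hz.
Qed.

Theorem theorem6p1 (m : nat) (Hm : (2 <= m)%nat) (H : R) (HH : H <> 0)
  (a : R) (b : Rbar) (Ha : 0 <= a) (Hab : Rbar_lt (Finite a) b)
  (u : R -> R)
  (Hsmooth : forall (k : nat) (al : R), inJ a b al -> ex_derive (Derive_n u k) al)
  (Hu' : forall al, inJ a b al -> Derive u al <> 0) :
  rot_CMC m a b u H <->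
  exists c1 sg : R, (sg = 1 \/ sg = -1) /\
    forall al, inJ a b al ->
      0 < c1 - H * al ^ 2 /\
      (c1 - H * al ^ 2) ^ (2 * m) < al ^ (2 * m) /\
      Derive u al =
        sg * (c1 - H * al ^ 2) ^ (2 * m - 1)
        / Rpower (al ^ (2 * m) - (c1 - H * al ^ 2) ^ (2 * m))
                 (INR (2 * m - 1) / INR (2 * m)).
Proof.
  assert (Hm1 : (1 <= m)%nat) by lia.
  split.
  - apply rot_CMC_profile; try assumption.
    intros al HJ; apply continuity_pt_filterlim, (ex_derive_continuous (Derive u)).
    exact (Hsmooth 1%nat al HJ).
  - intros [c1 [sg [Hs Hp]]]; exact (profile_rot_CMC m a b u H c1 sg Hm1 Ha Hs Hp).
Qed.
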